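(* For all blueprints $\alpha,\beta,\beta'$: if $\alpha\Uparrow\beta$ and $\beta\sqsubseteq_1\beta'$, then there exists a blueprint $\alpha'$ such that $\alpha\sqsubseteq_1\alpha'$ and $\alpha'\Uparrow\beta'$.
   Context: Addresses are finite sequences of positive integers with prefix order $\le$ ($<$ strict), concatenation $\cdot$, empty address $\varepsilon$. A partial tree is a function on a set of addresses; $\pi|_a$ is $c\mapsto\pi(a\cdot c)$; $\pi[a\leftarrow\pi']$ is the partial tree $\pi''$ with $\pi''|_a=\pi'$ and $\pi''(b)=\pi(b)$ for $b\in\mathrm{dom}(\pi)$ with $a\not\le b$. $\mathfrak S$ consists of all formulas (arity 0) and symbols $@_\phi$ (arity 2). A blueprint is a finite partial tree with values in $\mathfrak S$ such that if $\alpha(a)=@_\phi$ then $\alpha|_{a\cdot(1)},\alpha|_{a\cdot(2)}$ are non-empty. Notation: $\emptyset_{\mathbb B}$ empty blueprint; $\phi$ denotes $\varepsilon\mapsto\phi$; $@_\phi(\alpha_1,\alpha_2)$ ($\alpha_i$ non-empty) has root $@_\phi$ and $\alpha_i$ at $(i)$; for pairwise incomparable $\bar a=(a_1,\dots,a_k)$, $*_{\bar a}(\alpha_1,\dots,\alpha_k)$ is the blueprint of minimal domain whose restriction at $a_i$ is $\alpha_i$. $\Uparrow$ is the least reflexive transitive relation with $\beta[a\leftarrow\beta|_b]\Uparrow\beta$ whenever $a,b\in\mathrm{dom}(\beta)$, $a<b$, $\beta(a)=\beta(b)$. $\equiv$ is the least relation with: $\emptyset_{\mathbb B}\equiv\emptyset_{\mathbb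 B}$; $\phi\equiv\phi$; $@_\phi(\alpha_1,\alpha_2)\equiv@_\phi(\beta_1,\beta_2)$ if $\alpha_i\equiv\beta_i$; $*_{\bar a}(\alpha_1,\dots,\alpha_n)\equiv*_{\bar b}(\beta_1,\dots,\beta_n)$ if $\alpha_i\equiv\beta_i$ for all $i$ (with $\bar a,\bar b$ pairwise-incomparable sequences of length $n$, not both $(\varepsilon)$, and some $\alpha_i,\beta_i$ non-empty). $\curvearrowleft_m$ is the least relation with: (1) if $\gamma_1\equiv\dots\equiv\gamma_{m+1}\not\equiv\emptyset_{\mathbb B}$ then $*_{\bar a}(\gamma_1,\dots,\gamma_m)\curvearrowleft_m*_{\bar a\cdot(b)}(\gamma_1,\dots,\gamma_{m+1})$; (2) if $\alpha=*_{\bar a}(\alpha_1,\dots,\alpha_n)$, $\beta=*_{\bar b}(\beta_1,\dots,\beta_p)$, $\alpha\curvearrowleft_m\beta$, $\gamma$ non-empty, then $@_\phi(\alpha,\gamma)\curvearrowleft_m@_\phi(\beta,\gamma)$, $@_\phi(\gamma,\alpha)\curvearrowleft_m@_\phi(\gamma,\beta)$, $*_{\bar a\cdot(c)}(\alpha_1,\dots,\alpha_n,\gamma)\curvearrowleft_m*_{\bar b\cdot(c)}(\beta_1,\dots,\beta_p,\gamma)$. $\sqsubseteq_m$ is the reflexive transitive closure of $\equiv\cup\curvearrowleft_m$. *)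

From mathcomp Require Import all_boot.
Set Implicit Arguments. Unset Strict Implicit. Unset Printing Implicit Defensive.

(** Addresses: finite sequences of positive integers (positivity is imposed
    wherever an address is used: domains of blueprints, index tuples of star). *)
Definition address := seq nat.
Definition addr_ok (a : address) : bool := all (fun i => 0 < i) a.

Definition addr_le (a b : address) : bool := prefix a b.
Definition addr_lt (a b : address) : bool := prefix a b && (a != b).

Section Blueprints.
Variable F : Type. (* the type of formulas *)

(** The signature S: formulas (arity 0) and symbols @_phi (arity 2). *)
Inductive sym := Form of F | App of F.

(** Partial trees: functions on a set of addresses (None = undefined). *)
Definition ptree := address -> option sym.

Definition restrict (p : ptree) (a : address) : ptree := fun c => p (a ++ c).

Definition graft (p : ptree) (a : address) (p' : ptree) : ptree :=
  fun b => if addr_le a b then p' (drop (size a) b) else p b.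

Definition nonempty (p : ptree) : Prop := exists a, p a <> None.

Definition blueprint (p : ptree) : Prop :=
  [/\ (exists s : seq address, forall a, p a <> None -> a \in s),
      (forall a, p a <> None -> addr_ok a) &
      (forall a phi, p a = Some (App phi) ->
         nonempty (restrict p (rcons a 1)) /\ nonempty (restrict p (rcons a 2)))].

Definition bempty : ptree := fun _ => None.
Definition bform (phi : F) : ptree := fun a => if a == [::] then Some (Form phi) else None.
Definition bapp (phi : F) (a1 a2 : ptree) : ptree := fun a =>
  match a with
  | [::] => Some (App phi)
  | i :: c => if i == 1 then a1 c else if i == 2 then a2 c else None
  end.

(** *_abar(alpha_1,...,alpha_k), given as the list of pairs (a_i, alpha_i);
    the blueprint of minimal domain whose restriction at a_i is alpha_i
    (meaningful when the a_i are pairwise incomparable, see star_ok). *)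
Definition bstar (s : seq (address * ptree)) : ptree := fun b =>
  match [seq x <- s | addr_le x.1 b] with
  | x :: _ => x.2 (drop (size x.1) b)
  | [::] => None
  end.

Definition incomparable (a b : address) : bool := ~~ addr_le a b && ~~ addr_le b a.

Definition star_ok (s : seq (address * ptree)) : Prop :=
  all addr_ok (map fst s) /\ pairwise incomparable (map fst s).

Inductive rtc (R : ptree -> ptree -> Prop) : ptree -> ptree -> Prop :=
| rtc_refl x : rtc R x x
| rtc_step x y : R x y -> rtc R x y
| rtc_trans x y z : rtc R x y -> rtc R y z -> rtc R x z.

Inductive up_step : ptree -> ptree -> Prop :=
| up_step_intro (beta : ptree) (a b : address) :
    beta a <> None -> beta b <> None -> addr_lt a b -> beta a = beta b ->
    up_step (graft beta a (restrict beta b)) beta.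

Definition up := rtc up_step.

Definition nth_bp (s : seq (address * ptree)) (i : nat) : ptree :=
  (nth ([::], bempty) s i).2.

Inductive bequiv : ptree -> ptree -> Prop :=
| bequiv_empty : bequiv bempty bempty
| bequiv_form phi : bequiv (bform phi) (bform phi)
| bequiv_app phi a1 a2 b1 b2 :
    nonempty a1 -> nonempty a2 -> nonempty b1 -> nonempty b2 ->
    bequiv a1 b1 -> bequiv a2 b2 -> bequiv (bapp phi a1 a2) (bapp phi b1 b2)
| bequiv_star (sa sb : seq (address * ptree)) :
    size sa = size sb -> star_ok sa -> star_ok sb ->
    ~ (map fst sa = [:: [::]] /\ map fst sb = [:: [::]]) ->
    (forall i, i < size sa -> bequiv (nth_bp sa i) (nth_bp sb i)) ->
    (exists2 i, i < size sa & nonempty (nth_bp sa i) /\ nonempty (nth_bp sb i)) ->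
    bequiv (bstar sa) (bstar sb).

Inductive bcyc (m : nat) : ptree -> ptree -> Prop :=
| bcyc_base (abar : seq address) (b : address) (gs : seq ptree) :
    size abar = m -> size gs = m.+1 ->
    star_ok (zip (rcons abar b) gs) ->
    (forall i, i < m -> bequiv (nth bempty gs i) (nth bempty gs i.+1)) ->
    ~ bequiv (nth bempty gs m) bempty ->
    bcyc m (bstar (zip abar (take m gs))) (bstar (zip (rcons abar b) gs))
| bcyc_app_l phi (sa sb : seq (address * ptree)) (g : ptree) :
    star_ok sa -> star_ok sb -> bcyc m (bstar sa) (bstar sb) ->
    blueprint g -> nonempty g -> nonempty (bstar sa) -> nonempty (bstar sb) ->
    bcyc m (bapp phi (bstar sa) g) (bapp phi (bstar sb) g)
| bcyc_app_r phi (sa sb : seq (address * ptree)) (g : ptree) :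
    star_ok sa -> star_ok sb -> bcyc m (bstar sa) (bstar sb) ->
    blueprint g -> nonempty g -> nonempty (bstar sa) -> nonempty (bstar sb) ->
    bcyc m (bapp phi g (bstar sa)) (bapp phi g (bstar sb))
| bcyc_star (sa sb : seq (address * ptree)) (c : address) (g : ptree) :
    star_ok sa -> star_ok sb -> bcyc m (bstar sa) (bstar sb) ->
    blueprint g -> nonempty g ->
    star_ok (rcons sa (c, g)) -> star_ok (rcons sb (c, g)) ->
    bcyc m (bstar (rcons sa (c, g))) (bstar (rcons sb (c, g))).

Definition bsqsub (m : nat) : ptree -> ptree -> Prop :=
  rtc (fun x y => bequiv x y \/ bcyc m x y).

End Blueprints.

(* [up] is generated by collapses T[a <- T|_b] of two equally labelled nodes
   a < b, and [bsqsub 1] by single [bequiv] and [bcyc 1] steps, so it suffices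
   to push one collapse past one such step, at the cost of at most one step on
   the other side.  Along [bequiv] a collapse is transported to an equivalent
   collapse.  A [bcyc 1] step adds a copy of a star component: a collapse
   inside the copied component is performed in both copies (the second one
   transported along [bequiv]), and any other collapse is left untouched, the
   star structure being recovered from the fact that collapses only shrink the
   support.  Commutation of reflexive-transitive closures then yields the
   theorem, and [alpha'] is a blueprint since collapses preserve blueprints. *)

From mathcomp Require Import all_boot.
From Stdlib Require Import FunctionalExtensionality.
Set Implicit Arguments. Unset Strict Implicit. Unset Printing Implicit Defensive.
Set Bullet Behavior "Strict Subproofs".

Lemma prefix_total (a c x : address) :
  prefix a x -> prefix c x -> prefix a c || prefix c a.
Proof.
rewrite !prefixE => /eqP ha /eqP hc; apply/orP.
case: (leqP (size a) (size c)) => h; [left | right]; apply/eqP.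
- by rewrite -hc -take_min (minn_idPl h).
- by rewrite -ha -take_min (minn_idPl (ltnW h)).
Qed.

Lemma cat_drop_prefix (a x : address) : prefix a x -> a ++ drop (size a) x = x.
Proof. by case/prefixP=> s ->; rewrite drop_size_cat. Qed.

Lemma incomparableC (a c : address) : incomparable a c = incomparable c a.
Proof. by rewrite /incomparable andbC. Qed.

Lemma incomparable_prefixN (a c x : address) :
  incomparable a c -> prefix a x -> ~~ prefix c x.
Proof.
rewrite /incomparable /addr_le => /andP[/negbTE ac /negbTE ca] ax.
apply/negP => cx.
by have := prefix_total ax cx; rewrite ac ca.
Qed.

Lemma incomparable_prefixl (a c x : address) :
  prefix a x -> incomparable a c -> incomparable x c.
Proof.
move=> ax ac; apply/andP; split; last exact: incomparable_prefixN ac ax.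
by apply/negP => /(prefix_trans ax); case/andP: ac => /negP.
Qed.

Lemma prefix_rcons_inv (a c : address) i :
  prefix a (rcons c i) -> prefix a c \/ a = rcons c i.
Proof.
case/prefixP=> u; case/lastP: u => [|u j]; first by rewrite cats0; right.
by rewrite -rcons_cat => /rcons_inj [-> _]; left; apply: prefix_prefix.
Qed.

Lemma addr_lt_cat (c a b : address) : addr_lt (c ++ a) (c ++ b) = addr_lt a b.
Proof. by rewrite /addr_lt prefix_catr // eqseq_cat // eqxx. Qed.

Lemma addr_lt_cons (i : nat) (a b : address) : addr_lt (i :: a) (i :: b) = addr_lt a b.
Proof. exact: addr_lt_cat [:: i] a b. Qed.

Section Commutation.
Variables (F : Type) (R S : ptree F -> ptree F -> Prop).
Hypothesis RS : forall x y y', R x y -> S y y' -> exists2 x', x = x' \/ S x x' & rtc R x' y'.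

Lemma rtc_commute1 x y y' : rtc R x y -> S y y' -> exists2 x', x = x' \/ S x x' & rtc R x' y'.
Proof.
move=> xy; elim: xy y' => [z | {}x {}y | {}x {}y z xy IH1 _ IH2] y' Sy'.
- by exists y'; [right | apply: rtc_refl].
- exact: RS.
- have [y1 [<-|yy1] y1y'] := IH2 _ Sy'; first by exists x; [left | apply: rtc_trans xy y1y'].
  have [x1 xx1 x1y1] := IH1 _ yy1; exists x1 => //; exact: rtc_trans x1y1 y1y'.
Qed.

Lemma rtc_commute x y y' : rtc R x y -> rtc S y y' -> exists2 x', rtc S x x' & rtc R x' y'.
Proof.
move=> xy yy'; elim: yy' x xy => [z | {}y {}y' yy' | {}y z {}y' _ IH1 _ IH2] x xy.
- by exists x; [apply: rtc_refl |].
- have [x' [<-|xx'] x'y'] := rtc_commute1 xy yy'; [exists x | exists x'] => //.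
  + exact: rtc_refl.
  + exact: rtc_step.
- have [x1 xx1 x1z] := IH1 _ xy; have [x2 x1x2 x2y'] := IH2 _ x1z.
  by exists x2 => //; apply: rtc_trans xx1 x1x2.
Qed.

End Commutation.

Section Trees.
Variable F : Type.
Implicit Types (T X Y Z W g A B : ptree F) (s : seq (address * ptree F))
  (p : address * ptree F).

Lemma graft_pre T a X x : prefix a x -> graft T a X x = X (drop (size a) x).
Proof. by rewrite /graft /addr_le => ->. Qed.

Lemma graft_out T a X x : ~~ prefix a x -> graft T a X x = T x.
Proof. by rewrite /graft /addr_le => /negbTE ->. Qed.

Lemma graft_cat T a X c : graft T a X (a ++ c) = X c.
Proof. by rewrite graft_pre ?prefix_prefix // drop_size_cat. Qed.

Lemma graft_nil T X : graft T [::] X = X.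
Proof. by apply: functional_extensionality => x; rewrite graft_pre ?prefix0s ?drop0. Qed.

Lemma graft_graft T a X Y : graft (graft T a X) a Y = graft T a Y.
Proof.
apply: functional_extensionality => x.
by case: (boolP (prefix a x)) => ax; [rewrite !graft_pre | rewrite !graft_out].
Qed.

Lemma graftC T a c X Y :
  incomparable a c -> graft (graft T a X) c Y = graft (graft T c Y) a X.
Proof.
move=> ac; apply: functional_extensionality => x.
case: (boolP (prefix a x)) => ax.
- by rewrite graft_out ?(incomparable_prefixN ac) // !graft_pre.
- rewrite [in RHS]graft_out //.
  by case: (boolP (prefix c x)) => cx; [rewrite !graft_pre | rewrite !graft_out].
Qed.

Lemma graft_graft_cat T c a X W :
  graft (graft T c X) (c ++ a) W = graft T c (graft X a W).
Proof.
apply: functional_extensionality => x.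
case: (boolP (prefix c x)) => cx; last first.
  by rewrite !graft_out //; apply: contra cx; apply: catl_prefix.
rewrite -[x](cat_drop_prefix cx) graft_cat.
case: (boolP (prefix a (drop (size c) x))) => ax.
- by rewrite -[drop _ x](cat_drop_prefix ax) catA !graft_cat.
- rewrite [LHS]graft_out; last by rewrite prefix_catr // eqxx.
  by rewrite !graft_cat graft_out.
Qed.

Lemma restrict_nil T : restrict T [::] = T.
Proof. by apply: functional_extensionality. Qed.

Lemma restrict_graft_cat T c X y : restrict (graft T c X) (c ++ y) = restrict X y.
Proof. by apply: functional_extensionality => z; rewrite /restrict -catA graft_cat. Qed.

Lemma restrict_graft_out T c X x :
  incomparable x c -> restrict (graft T c X) x = restrict T x.
Proof.
move=> xc; apply: functional_extensionality => y; rewrite /restrict graft_out //.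
exact: incomparable_prefixN xc (prefix_prefix x y).
Qed.

Definition collapse T a b := graft T a (restrict T b).

Definition collapsible T a b :=
  [/\ T a <> None, T b <> None, addr_lt a b & T a = T b].

Lemma up_collapse T a b : collapsible T a b -> up (collapse T a b) T.
Proof. by case=> *; apply: rtc_step; constructor. Qed.

Lemma collapse_cat T a b c : collapse T a b (a ++ c) = T (b ++ c).
Proof. exact: graft_cat. Qed.

Lemma collapse_self T a b : collapse T a b a = T b.
Proof. by have := collapse_cat T a b [::]; rewrite !cats0. Qed.

Lemma collapse_nonempty T a b : T b <> None -> nonempty (collapse T a b).
Proof. by exists a; rewrite collapse_self. Qed.

Lemma collapse_nil T b : collapse T [::] b = restrict T b.
Proof. exact: graft_nil. Qed.

Lemma collapse_graft_cat T c X a b :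
  collapse (graft T c X) (c ++ a) (c ++ b) = graft T c (collapse X a b).
Proof. by rewrite /collapse restrict_graft_cat graft_graft_cat. Qed.

Lemma collapse_graft_out T c g a b :
  incomparable a c -> prefix a b ->
  collapse (graft T c g) a b = graft (collapse T a b) c g.
Proof.
move=> ac ab; rewrite /collapse restrict_graft_out; last exact: incomparable_prefixl ab ac.
by rewrite graftC // incomparableC.
Qed.

Lemma collapsible_graft_cat T c X a b :
  collapsible (graft T c X) (c ++ a) (c ++ b) <-> collapsible X a b.
Proof. by rewrite /collapsible !graft_cat addr_lt_cat. Qed.

Lemma collapsible_graft_out T c g a b :
  incomparable a c -> incomparable b c ->
  collapsible (graft T c g) a b <-> collapsible T a b.
Proof.
rewrite /incomparable /addr_le => /andP[_ ca] /andP[_ cb].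
by rewrite /collapsible !graft_out.
Qed.

Lemma collapse_child_nonempty T a b c i e :
  T b <> None -> ~~ prefix a c -> T (rcons c i ++ e) <> None ->
  nonempty (restrict (collapse T a b) (rcons c i)).
Proof.
move=> Tb ac Te; case: (boolP (prefix (rcons c i) a)) => ca.
  exists (drop (size (rcons c i)) a).
  by rewrite /restrict cat_drop_prefix // collapse_self.
exists e; rewrite /restrict /collapse graft_out //; apply/negP => ae.
case/orP: (prefix_total ae (prefix_prefix (rcons c i) e)) => [|ca']; last by rewrite ca' in ca.
by case/prefix_rcons_inv => [ac' | eac]; [rewrite ac' in ac | rewrite eac prefix_refl in ca].
Qed.

Lemma collapse_blueprint T a b :
  collapsible T a b -> blueprint T -> blueprint (collapse T a b).
Proof.
case=> Ta Tb _ _ [[s hs] hok happ]; split.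
- exists (s ++ map (fun y => a ++ drop (size b) y) s) => x.
  case: (boolP (prefix a x)) => ax; last by rewrite /collapse graft_out // mem_cat => /hs ->.
  rewrite -[x](cat_drop_prefix ax) collapse_cat => /hs hx; rewrite mem_cat; apply/orP; right.
  by apply/mapP; exists (b ++ drop (size a) x); rewrite ?drop_size_cat.
- move=> x; case: (boolP (prefix a x)) => ax; last by rewrite /collapse graft_out //; apply: hok.
  rewrite -[x](cat_drop_prefix ax) collapse_cat => /hok.
  by rewrite /addr_ok !all_cat => /andP[_ ->]; rewrite andbT; apply: hok.
- move=> c phi; case: (boolP (prefix a c)) => ac.
  + rewrite -[c](cat_drop_prefix ac) collapse_cat => /happ [[e1 h1] [e2 h2]].
    by split; [exists e1 | exists e2];
      rewrite /restrict rcons_cat -catA collapse_cat catA -rcons_cat.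
  + rewrite /collapse graft_out // => /happ [[e1 h1] [e2 h2]].
    by split; apply: collapse_child_nonempty; eauto.
Qed.

Lemma up_blueprint X Y : up X Y -> blueprint Y -> blueprint X.
Proof.
elim=> // [x y [] T a b Ta Tb ab eab | x y z _ IH1 _ IH2] bpY.
- exact: (@collapse_blueprint T a b).
- exact: IH1 (IH2 bpY).
Qed.

Lemma up_graft T c X Y : up X Y -> up (graft T c X) (graft T c Y).
Proof.
elim=> [x | x y [] U a b Ua Ub ab eab | x y z _ IH1 _ IH2].
- exact: rtc_refl.
- rewrite -[graft T c (graft U a _)]/(graft T c (collapse U a b)) -collapse_graft_cat.
  by apply: up_collapse; apply/collapsible_graft_cat.
- exact: rtc_trans IH1 IH2.
Qed.

Definition avoids Y c := forall y, Y y <> None -> incomparable y c.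

Lemma up_avoids X Y c : up X Y -> avoids Y c -> avoids X c.
Proof.
elim=> // [x y [] U a b Ua _ _ _ | x y z _ IH1 _ IH2] hY; last exact: IH1 (IH2 hY).
move=> w; case: (boolP (prefix a w)) => aw.
  by move=> _; exact: incomparable_prefixl aw (hY a Ua).
by rewrite graft_out //; apply: hY.
Qed.

Lemma up_graft_out X Y g c :
  up X Y -> avoids Y c -> up (graft X c g) (graft Y c g).
Proof.
elim=> [x | x y [] U a b Ua Ub ab eab | x y z XY IH1 YZ IH2] hY.
- exact: rtc_refl.
- have ac := hY _ Ua; have bc := hY _ Ub.
  rewrite -[graft (graft U a _) c g]/(graft (collapse U a b) c g).
  rewrite -collapse_graft_out //; last by case/andP: ab.
  by apply: up_collapse; apply/collapsible_graft_out.
- exact: rtc_trans (IH1 (up_avoids YZ hY)) (IH2 hY).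
Qed.

Lemma up_support X Y x : up X Y -> X x <> None -> exists2 y, Y y <> None & prefix y x.
Proof.
move=> XY; elim: XY x => [x | x y [] U a b Ua _ _ _ | x y z _ IH1 _ IH2] w Xw.
- by exists w; rewrite ?prefix_refl.
- case: (boolP (prefix a w)) => aw; first by exists a.
  by rewrite graft_out // in Xw; exists w; rewrite ?prefix_refl.
- have [y1 Yy1 y1w] := IH1 _ Xw; have [y2 Zy2 y2y1] := IH2 _ Yy1.
  by exists y2 => //; apply: prefix_trans y2y1 y1w.
Qed.

(** A star is an iterated graft ([bstar_cons]), so the incomparability of its
    addresses only matters when grafts have to be reordered. *)

Definition nth_addr (s : seq (address * ptree F)) i := (nth ([::], bempty F) s i).1.

Lemma bstar_nil : bstar [::] = bempty F.
Proof. by []. Qed.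

Lemma bstar_cons p s : bstar (p :: s) = graft (bstar s) p.1 p.2.
Proof.
apply: functional_extensionality => x; rewrite /bstar /graft /=.
by case: addr_le.
Qed.

Lemma bstar1 a g : bstar [:: (a, g)] = graft (bempty F) a g.
Proof. by rewrite bstar_cons. Qed.

Lemma bstar_root T : bstar [:: ([::], T)] = T.
Proof. by rewrite bstar1 graft_nil. Qed.

Lemma bstar_set s i v :
  pairwise incomparable (map fst s) -> i < size s ->
  bstar (set_nth ([::], bempty F) s i (nth_addr s i, v)) =
  graft (bstar s) (nth_addr s i) v.
Proof.
elim: s i => [|y s IH] [|i] //= /andP[ys ps] lti; rewrite !bstar_cons /=.
  by rewrite graft_graft.
rewrite IH // graftC // incomparableC.
by apply: (allP ys); rewrite /nth_addr -(nth_map _ [::]) ?mem_nth ?size_map.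
Qed.

Lemma bstar_nth_graft s i :
  pairwise incomparable (map fst s) -> i < size s ->
  graft (bstar s) (nth_addr s i) (nth_bp s i) = bstar s.
Proof.
move=> ps lti; rewrite -bstar_set //; congr bstar.
elim: s i lti {ps} => [|y s IH] [|i] //=; first by case: y.
by move=> /IH ->.
Qed.

Lemma bstar_rcons s c g :
  pairwise incomparable (rcons (map fst s) c) ->
  bstar (rcons s (c, g)) = graft (bstar s) c g.
Proof.
elim: s => [|p s IH]; first by rewrite bstar1.
rewrite /= all_rcons => /andP[/andP[pc _] ps].
by rewrite !bstar_cons IH // graftC // incomparableC.
Qed.

Lemma bstar_support s x : bstar s x <> None -> has (fun a => prefix a x) (map fst s).
Proof.
elim: s => [|p s IH] //; rewrite bstar_cons /=.
by case: (boolP (prefix p.1 x)) => // px; rewrite graft_out.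
Qed.

Lemma star_avoids s c :
  pairwise incomparable (rcons (map fst s) c) -> avoids (bstar s) c.
Proof.
rewrite pairwise_rcons => /andP[sc _] x /bstar_support /hasP[a sa ax].
exact: incomparable_prefixl ax (allP sc a sa).
Qed.

Definition components s Z := [seq (p.1, restrict Z p.1) | p <- s].

Lemma map_fst_components s Z : map fst (components s Z) = map fst s.
Proof. by rewrite -map_comp. Qed.

Lemma bstar_components s Z :
  (forall x, Z x <> None -> has (fun a => prefix a x) (map fst s)) ->
  bstar (components s Z) = Z.
Proof.
move=> hZ; apply: functional_extensionality => x.
have -> : bstar (components s Z) x =
          if has (fun a => prefix a x) (map fst s) then Z x else None.
  elim: s {hZ} => [|p s IH] //=; rewrite bstar_cons /=.
  case: (boolP (prefix p.1 x)) => px; last by rewrite graft_out.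
  by rewrite graft_pre // /restrict cat_drop_prefix.
by case: ifP => // /negP sx; case Zx: (Z x) => //; case: sx; apply: hZ; rewrite Zx.
Qed.

Lemma up_bstar s Z : up Z (bstar s) -> bstar (components s Z) = Z.
Proof.
move=> Zs; apply: bstar_components => x /(up_support Zs) [y /bstar_support sy yx].
by apply: sub_has sy => a /prefix_trans; apply.
Qed.

Lemma bstar_support_nth s x :
  bstar s x <> None -> exists2 j, j < size s & prefix (nth_addr s j) x.
Proof.
move=> /bstar_support /(has_nthP [::]) [j]; rewrite size_map => ltj jx.
by exists j; rewrite // /nth_addr -(nth_map _ [::]).
Qed.

Lemma restrict_bstar_nth s j z :
  pairwise incomparable (map fst s) -> j < size s ->
  restrict (bstar s) (nth_addr s j ++ z) = restrict (nth_bp s j) z.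
Proof. by move=> ps ltj; rewrite -(bstar_nth_graft ps ltj) restrict_graft_cat. Qed.

Lemma bstar_nth_cat s j z :
  pairwise incomparable (map fst s) -> j < size s ->
  bstar s (nth_addr s j ++ z) = nth_bp s j z.
Proof. by move=> ps ltj; rewrite -(bstar_nth_graft ps ltj) graft_cat. Qed.

Lemma bstar_nonempty s j :
  pairwise incomparable (map fst s) -> j < size s ->
  nonempty (nth_bp s j) -> nonempty (bstar s).
Proof. by move=> ps ltj [e he]; exists (nth_addr s j ++ e); rewrite bstar_nth_cat. Qed.

Lemma map_fst_set_nth s j v :
  j < size s -> map fst (set_nth ([::], bempty F) s j (nth_addr s j, v)) = map fst s.
Proof. by elim: s j => [|p s IH] [|j] //= /IH ->. Qed.

Lemma collapse_bstar_nth s j a b :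
  pairwise incomparable (map fst s) -> j < size s ->
  collapse (bstar s) (nth_addr s j ++ a) (nth_addr s j ++ b) =
  bstar (set_nth ([::], bempty F) s j (nth_addr s j, collapse (nth_bp s j) a b)).
Proof.
by move=> ps ltj; rewrite -[in LHS](bstar_nth_graft ps ltj) collapse_graft_cat bstar_set.
Qed.

Lemma collapsible_bstar_nth s j a b :
  pairwise incomparable (map fst s) -> j < size s ->
  collapsible (bstar s) (nth_addr s j ++ a) (nth_addr s j ++ b) <->
  collapsible (nth_bp s j) a b.
Proof. by move=> ps ltj; rewrite -(bstar_nth_graft ps ltj); apply: collapsible_graft_cat. Qed.

Lemma bapp_graftl phi A1 A2 : bapp phi A1 A2 = graft (bapp phi (bempty F) A2) [:: 1] A1.
Proof.
apply: functional_extensionality => x; rewrite /graft /addr_le.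
by case: x => [|[|[|[|i]]] c] //=; rewrite prefix0s drop0.
Qed.

Lemma bapp_graftr phi A1 A2 : bapp phi A1 A2 = graft (bapp phi A1 (bempty F)) [:: 2] A2.
Proof.
apply: functional_extensionality => x; rewrite /graft /addr_le.
by case: x => [|[|[|[|i]]] c] //=; rewrite prefix0s drop0.
Qed.

Lemma collapse_bappl phi A1 A2 a b :
  collapse (bapp phi A1 A2) (1 :: a) (1 :: b) = bapp phi (collapse A1 a b) A2.
Proof.
rewrite (bapp_graftl phi A1) (bapp_graftl phi (collapse A1 a b)).
by rewrite (collapse_graft_cat _ [:: 1]).
Qed.

Lemma collapse_bappr phi A1 A2 a b :
  collapse (bapp phi A1 A2) (2 :: a) (2 :: b) = bapp phi A1 (collapse A2 a b).
Proof.
rewrite (bapp_graftr phi _ A2) (bapp_graftr phi _ (collapse A2 a b)).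
by rewrite (collapse_graft_cat _ [:: 2]).
Qed.

Lemma up_bappl phi A B g : up A B -> up (bapp phi A g) (bapp phi B g).
Proof. by rewrite (bapp_graftl phi A) (bapp_graftl phi B); apply: up_graft. Qed.

Lemma up_bappr phi A B g : up A B -> up (bapp phi g A) (bapp phi g B).
Proof. by rewrite (bapp_graftr phi _ A) (bapp_graftr phi _ B); apply: up_graft. Qed.

Lemma up_restrict_bappl phi A1 A2 b :
  A1 b = Some (App phi) -> up (restrict A1 b) (bapp phi A1 A2).
Proof.
move=> eb; have := @up_collapse (bapp phi A1 A2) [::] (1 :: b).
by rewrite collapse_nil; apply; split; rewrite //= eb.
Qed.

Lemma up_restrict_bappr phi A1 A2 b :
  A2 b = Some (App phi) -> up (restrict A2 b) (bapp phi A1 A2).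
Proof.
move=> eb; have := @up_collapse (bapp phi A1 A2) [::] (2 :: b).
by rewrite collapse_nil; apply; split; rewrite //= eb.
Qed.

End Trees.

Section Steps.
Variable F : Type.
Implicit Types (T X Y Z A B g : ptree F) (s : seq (address * ptree F)).

Lemma bequiv_nonempty X Y : bequiv X Y -> nonempty X -> nonempty Y.
Proof.
elim=> //.
- by exists [::].
- move=> sa sb eqs _ [_ pb] _ _ _ [j ltj [_ nej]] _.
  by apply: (bstar_nonempty pb _ nej); rewrite -eqs.
Qed.

Lemma bequiv_restrict X Y x : bequiv X Y -> X x <> None ->
  exists y, Y y = X x /\ bequiv (restrict X x) (restrict Y y).
Proof.
move=> XY; elim: XY x => [| phi | phi A1 A2 B1 B2 nA1 nA2 nB1 nB2 e1 IH1 e2 IH2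
                        | sa sb eqs [_ pa] [_ pb] _ _ IH _] //.
- by case=> // _; exists [::]; split; last exact: bequiv_form.
- case=> [|[|[|[|i]]] c] //= Xc.
  + by exists [::]; split; last apply: bequiv_app.
  + by have [y [<- ?]] := IH1 c Xc; exists (1 :: y).
  + by have [y [<- ?]] := IH2 c Xc; exists (2 :: y).
- move=> x Xx; have [j ltj /cat_drop_prefix ex] := bstar_support_nth Xx.
  have ltj' : j < size sb by rewrite -eqs.
  move: Xx; rewrite -ex bstar_nth_cat // => /IH [//| y [ey eqy]].
  exists (nth_addr sb j ++ y).
  by rewrite !restrict_bstar_nth // !bstar_nth_cat.
Qed.

Lemma bequiv_star_set sa sb j va vb :
  size sa = size sb -> star_ok sa -> star_ok sb ->
  ~ (map fst sa = [:: [::]] /\ map fst sb = [:: [::]]) ->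
  (forall i, i < size sa -> bequiv (nth_bp sa i) (nth_bp sb i)) ->
  j < size sa -> bequiv va vb -> nonempty va -> nonempty vb ->
  bequiv (bstar (set_nth ([::], bempty F) sa j (nth_addr sa j, va)))
         (bstar (set_nth ([::], bempty F) sb j (nth_addr sb j, vb))).
Proof.
move=> eqs oka okb notroot eqv ltj eqj nea neb; have ltj' : j < size sb by rewrite -eqs.
have size_set s v : j < size s -> size (set_nth ([::], bempty F) s j (nth_addr s j, v)) = size s.
  by move=> lt; rewrite size_set_nth (maxn_idPr lt).
apply: bequiv_star; rewrite ?size_set //.
- by rewrite /star_ok (map_fst_set_nth va ltj).
- by rewrite /star_ok (map_fst_set_nth vb ltj').
- by rewrite (map_fst_set_nth va ltj) (map_fst_set_nth vb ltj').
- move=> i lti; rewrite /nth_bp !nth_set_nth /=.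
  by case: eqP => _; [exact: eqj | apply: eqv].
- by exists j; rewrite // /nth_bp !nth_set_nth /= eqxx.
Qed.

Lemma bequiv_collapse X Y a b : bequiv X Y -> collapsible X a b ->
  exists a' b', collapsible Y a' b' /\ bequiv (collapse X a b) (collapse Y a' b').
Proof.
move=> XY; elim: XY a b => [| phi | phi A1 A2 B1 B2 nA1 nA2 nB1 nB2 e1 IH1 e2 IH2
                        | sa sb eqs oka okb notroot eqv IH _] a b.
- by case.
- by case=> _; case: b => [|i b] //; rewrite /addr_lt prefixs0 andbN.
- case=> + + + +; case: a => [|[|[|[|i]]] a] //=; case: b => [|[|[|[|k]]] b] //=;
    rewrite ?addr_lt_cons // => Xa Xb ab eab.
  + have [y [ey eqy]] := bequiv_restrict e1 Xb.
    exists [::], (1 :: y); split; first by split; rewrite //= ey.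
    by rewrite !collapse_nil.
  + have [y [ey eqy]] := bequiv_restrict e2 Xb.
    exists [::], (2 :: y); split; first by split; rewrite //= ey.
    by rewrite !collapse_nil.
  + have [a' [b' [cY eqc]]] := IH1 a b (And4 Xa Xb ab eab).
    exists (1 :: a'), (1 :: b'); rewrite !collapse_bappl.
    case: cY => Ya Yb ab' eab'; split; first by split; rewrite //= addr_lt_cons.
    by apply: bequiv_app => //; apply: collapse_nonempty.
  + have [a' [b' [cY eqc]]] := IH2 a b (And4 Xa Xb ab eab).
    exists (2 :: a'), (2 :: b'); rewrite !collapse_bappr.
    case: cY => Ya Yb ab' eab'; split; first by split; rewrite //= addr_lt_cons.
    by apply: bequiv_app => //; apply: collapse_nonempty.
- case: (oka) (okb) => _ pa [_ pb] cX; have [Xa _ /andP[ab _] _] := cX.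
  have [j ltj ja] := bstar_support_nth Xa.
  have ltj' : j < size sb by rewrite -eqs.
  move: cX; rewrite -[a](cat_drop_prefix ja) -[b](cat_drop_prefix (prefix_trans ja ab)).
  move/(collapsible_bstar_nth _ _ pa ltj) => cX.
  have [a' [b' [cY eqc]]] := IH j ltj _ _ cX.
  exists (nth_addr sb j ++ a'), (nth_addr sb j ++ b').
  split; first exact/(collapsible_bstar_nth _ _ pb ltj').
  rewrite !collapse_bstar_nth //; apply: bequiv_star_set => //.
  + by case: cX => _ ? _ _; apply: collapse_nonempty.
  + by case: cY => _ ? _ _; apply: collapse_nonempty.
Qed.

Lemma bcyc_bappl m phi A B g :
  bcyc m A B -> blueprint g -> nonempty g -> nonempty A -> nonempty B ->
  bcyc m (bapp phi A g) (bapp phi B g).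
Proof.
(* Every tree is the star with the single address [[::]]. *)
move=> AB bpg neg neA neB; rewrite -(bstar_root A) -(bstar_root B).
by apply: bcyc_app_l; rewrite ?bstar_root.
Qed.

Lemma bcyc_bappr m phi A B g :
  bcyc m A B -> blueprint g -> nonempty g -> nonempty A -> nonempty B ->
  bcyc m (bapp phi g A) (bapp phi g B).
Proof.
move=> AB bpg neg neA neB; rewrite -(bstar_root A) -(bstar_root B).
by apply: bcyc_app_r; rewrite ?bstar_root.
Qed.

Lemma bcyc1_mono X Y x : bcyc 1 X Y -> X x <> None -> Y x = X x.
Proof.
move=> XY; elim: XY x => [abar c gs | phi sa sb g _ _ _ IH _ _ _ _ | phi sa sb g _ _ _ IH _ _ _ _
                        | sa sb c g _ _ _ IH _ _ [_ pa] [_ pb]].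
- case: abar => [|a1 []] // _; case: gs => [|g1 [|g2 []]] //= _ _ _ _ x.
  rewrite !bstar_cons /=; case: (boolP (prefix a1 x)) => a1x; first by rewrite !graft_pre.
  by rewrite graft_out.
- by case=> [|[|[|[|i]]] x] //= /IH.
- by case=> [|[|[|[|i]]] x] //= /IH.
- move: pa pb; rewrite !map_rcons => pa pb x; rewrite !bstar_rcons //.
  by case: (boolP (prefix c x)) => cx; [rewrite !graft_pre | rewrite !graft_out // => /IH].
Qed.

Lemma bcyc1_restrict X Y x : bcyc 1 X Y -> X x <> None ->
  restrict X x = restrict Y x \/ bcyc 1 (restrict X x) (restrict Y x).
Proof.
move=> XY; elim: XY x => [abar c gs | phi sa sb g oka okb AB IH bpg neg nea neb
                        | phi sa sb g oka okb AB IH bpg neg nea neb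
                        | sa sb c g _ _ _ IH _ _ [_ pa] [_ pb]].
- case: abar => [|a1 []] // _; case: gs => [|g1 [|g2 []]] //= _ _ _ _ x.
  rewrite !bstar_cons /=; case: (boolP (prefix a1 x)) => a1x; last by rewrite graft_out.
  by rewrite -[x](cat_drop_prefix a1x) !restrict_graft_cat; left.
- case=> [|[|[|[|i]]] x] //= Xx; last by left.
  + by rewrite !restrict_nil; right; apply: bcyc_app_l.
  + exact: IH.
- case=> [|[|[|[|i]]] x] //= Xx; first by rewrite !restrict_nil; right; apply: bcyc_app_r.
  + by left.
  + exact: IH.
- move: pa pb; rewrite !map_rcons => pa pb x; rewrite !bstar_rcons //.
  case: (boolP (prefix c x)) => cx.
    by rewrite -[x](cat_drop_prefix cx) !restrict_graft_cat; left.
  rewrite graft_out // => /[dup] Xx /(star_avoids pa) xc.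
  by rewrite !restrict_graft_out //; apply: IH.
Qed.

Definition collapse_commutes X Y := forall a b, collapsible X a b ->
  exists2 Z, Z = collapse X a b \/ bcyc 1 (collapse X a b) Z & up Z Y.

Lemma collapse_commutes_base a1 c g1 g2 :
  star_ok [:: (a1, g1); (c, g2)] -> bequiv g1 g2 ->
  collapse_commutes (graft (bempty F) a1 g1) (graft (graft (bempty F) c g2) a1 g1).
Proof.
move=> ok e12 a b cX; have [Xa _ /andP[ab _] _] := cX.
have a1a : prefix a1 a by case: (boolP (prefix a1 a)) => // na; rewrite graft_out in Xa.
have ca1 : incomparable c a1 by case: ok => _ /=; rewrite incomparableC !andbT.
move: cX; rewrite -[a](cat_drop_prefix a1a) -[b](cat_drop_prefix (prefix_trans a1a ab)).
set a0 := drop _ a; set b0 := drop _ b.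
(* The collapse is done in both copies: in [g2] it is transported along [bequiv]. *)
move/collapsible_graft_cat => c1; have [a' [b' [c2 e']]] := bequiv_collapse e12 c1.
have swap X1 X2 : graft (graft (bempty F) c X2) a1 X1 = graft (graft (bempty F) a1 X1) c X2.
  exact: graftC.
exists (graft (graft (bempty F) c (collapse g2 a' b')) a1 (collapse g1 a0 b0)).
- right; rewrite collapse_graft_cat.
  have := @bcyc_base F 1 [:: a1] c [:: collapse g1 a0 b0; collapse g2 a' b'] erefl erefl.
  rewrite /= !bstar_cons bstar_nil /=; apply=> //; first by case.
  case: c2 => _ Yb _ _ /bequiv_nonempty /(_ (collapse_nonempty _ Yb)).
  by case=> x [].
- apply: rtc_trans (up_graft _ _ (up_collapse c1)).
  by rewrite !swap; apply: up_graft; apply: up_collapse.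
Qed.

Lemma collapse_commutes_bappl phi A B g :
  bcyc 1 A B -> collapse_commutes A B -> blueprint g -> nonempty g ->
  nonempty A -> nonempty B -> collapse_commutes (bapp phi A g) (bapp phi B g).
Proof.
move=> AB IH bpg neg neA neB a b [].
case: a => [|[|[|[|i]]] a] //=; case: b => [|[|[|[|k]]] b] //=;
  rewrite ?addr_lt_cons // => Xa Xb ab eab.
- exists (restrict B b); last by apply: up_restrict_bappl; rewrite (bcyc1_mono AB Xb).
  rewrite collapse_nil -[restrict (bapp _ _ _) _]/(restrict A b).
  by case: (bcyc1_restrict AB Xb) => [->|]; [left | right].
- exists (restrict g b); last by apply: up_restrict_bappr; rewrite eab.
  by rewrite collapse_nil; left.
- have [Z eZ upZ] := IH a b (And4 Xa Xb ab eab).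
  exists (bapp phi Z g); last exact: up_bappl.
  rewrite collapse_bappl; case: eZ => [->|cZ]; [by left | right].
  apply: bcyc_bappl => //; first exact: collapse_nonempty.
  by exists a; rewrite (bcyc1_mono cZ) collapse_self.
- exists (bapp phi B (collapse g a b)); last exact/up_bappr/up_collapse.
  rewrite collapse_bappr; right; apply: bcyc_bappl => //.
  + exact: collapse_blueprint.
  + exact: collapse_nonempty.
Qed.

Lemma collapse_commutes_bappr phi A B g :
  bcyc 1 A B -> collapse_commutes A B -> blueprint g -> nonempty g ->
  nonempty A -> nonempty B -> collapse_commutes (bapp phi g A) (bapp phi g B).
Proof.
move=> AB IH bpg neg neA neB a b [].
case: a => [|[|[|[|i]]] a] //=; case: b => [|[|[|[|k]]] b] //=;
  rewrite ?addr_lt_cons // => Xa Xb ab eab.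
- exists (restrict g b); last by apply: up_restrict_bappl; rewrite eab.
  by rewrite collapse_nil; left.
- exists (restrict B b); last by apply: up_restrict_bappr; rewrite (bcyc1_mono AB Xb).
  rewrite collapse_nil -[restrict (bapp _ _ _) _]/(restrict A b).
  by case: (bcyc1_restrict AB Xb) => [->|]; [left | right].
- exists (bapp phi (collapse g a b) B); last exact/up_bappl/up_collapse.
  rewrite collapse_bappl; right; apply: bcyc_bappr => //.
  + exact: collapse_blueprint.
  + exact: collapse_nonempty.
- have [Z eZ upZ] := IH a b (And4 Xa Xb ab eab).
  exists (bapp phi g Z); last exact: up_bappr.
  rewrite collapse_bappr; case: eZ => [->|cZ]; [by left | right].
  apply: bcyc_bappr => //; first exact: collapse_nonempty.
  by exists a; rewrite (bcyc1_mono cZ) collapse_self.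
Qed.

Lemma bcyc_graft_stars sa sb c g A Z :
  up A (bstar sa) -> up Z (bstar sb) -> bcyc 1 A Z -> blueprint g -> nonempty g ->
  star_ok (rcons sa (c, g)) -> star_ok (rcons sb (c, g)) ->
  bcyc 1 (graft A c g) (graft Z c g).
Proof.
move=> /up_bstar <- /up_bstar <- AZ bpg neg.
rewrite /star_ok !map_rcons -(map_fst_components sa A) -(map_fst_components sb Z).
move=> /[dup] okA' [_ pA] /[dup] okZ' [_ pZ].
rewrite -!bstar_rcons //; apply: bcyc_star => //; rewrite /star_ok ?map_rcons //.
- by case: okA'; rewrite all_rcons pairwise_rcons => /andP[_ ->] /andP[_ ->].
- by case: okZ'; rewrite all_rcons pairwise_rcons => /andP[_ ->] /andP[_ ->].
Qed.

Lemma collapse_commutes_bstar_rcons sa sb c g :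
  star_ok sa -> star_ok sb ->
  bcyc 1 (bstar sa) (bstar sb) -> collapse_commutes (bstar sa) (bstar sb) ->
  blueprint g -> nonempty g -> star_ok (rcons sa (c, g)) -> star_ok (rcons sb (c, g)) ->
  collapse_commutes (bstar (rcons sa (c, g))) (bstar (rcons sb (c, g))).
Proof.
move=> oksa oksb AB IH bpg neg oka okb; have [_ pa] := oka; have [_ pb] := okb.
move: pa pb; rewrite !map_rcons => pa pb; rewrite !bstar_rcons // => a b cX.
have [Xa _ /andP[ab _] _] := cX.
case: (boolP (prefix c a)) => ca.
- move: cX; rewrite -[a](cat_drop_prefix ca) -[b](cat_drop_prefix (prefix_trans ca ab)).
  move/collapsible_graft_cat => cg.
  exists (graft (bstar sb) c (collapse g (drop (size c) a) (drop (size c) b))).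
  + rewrite collapse_graft_cat; right; rewrite -!bstar_rcons //.
    have ok s X : star_ok (rcons s (c, g)) -> star_ok (rcons s (c, X)).
      by rewrite /star_ok !map_rcons.
    apply: bcyc_star => //; try exact: ok; first exact: collapse_blueprint.
    by case: cg => _ gb _ _; apply: collapse_nonempty.
  + exact/up_graft/up_collapse.
- have ac : incomparable a c by apply: (star_avoids pa); rewrite graft_out in Xa.
  have bc := incomparable_prefixl ab ac.
  move/(collapsible_graft_out _ _ ac bc): cX => cA.
  have [Z eZ upZ] := IH a b cA.
  exists (graft Z c g); last exact: up_graft_out upZ (star_avoids pb).
  rewrite collapse_graft_out //; case: eZ => [->|cZ]; [by left | right].
  exact: bcyc_graft_stars (up_collapse cA) upZ cZ bpg neg oka okb.
Qed.

Lemma bcyc1_collapse_commutes X Y : bcyc 1 X Y -> collapse_commutes X Y.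
Proof.
elim=> [abar c gs | phi sa sb g _ _ AB IH bpg neg neA neB
      | phi sa sb g _ _ AB IH bpg neg neA neB | sa sb c g oka okb AB IH bpg neg oka' okb'].
- case: abar => [|a1 []] // _; case: gs => [|g1 [|g2 []]] //= _ ok eqv _.
  by rewrite !bstar_cons bstar_nil; apply: collapse_commutes_base ok (eqv 0 isT).
- exact: collapse_commutes_bappl.
- exact: collapse_commutes_bappr.
- exact: collapse_commutes_bstar_rcons.
Qed.

Lemma up_step_commutes (x y y' : ptree F) :
  up_step x y -> bequiv y y' \/ bcyc 1 y y' ->
  exists2 x', x = x' \/ (bequiv x x' \/ bcyc 1 x x') & up x' y'.
Proof.
case=> T a b Ta Tb ab eab; have cT : collapsible T a b by [].
case=> [e | c].
- have [a' [b' [cY eqc]]] := bequiv_collapse e cT.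
  by exists (collapse y' a' b'); [right; left | apply: up_collapse].
- have [Z eZ upZ] := bcyc1_collapse_commutes c cT.
  by exists Z => //; case: eZ => [->|]; [left | right; right].
Qed.

End Steps.

Theorem lemma4p10 (F : Type) (alpha beta beta' : ptree F) :
  blueprint alpha -> blueprint beta -> blueprint beta' ->
  up alpha beta -> bsqsub 1 beta beta' ->
  exists alpha' : ptree F,
    blueprint alpha' /\ bsqsub 1 alpha alpha' /\ up alpha' beta'.
Proof.
move=> _ _ bp' up_ab sq_bb'.
have [alpha' sq_aa' up_a'b'] := rtc_commute (@up_step_commutes F) up_ab sq_bb'.
by exists alpha'; split; [exact: up_blueprint up_a'b' bp' | split].
Qed.
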